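(* For $l>0$ let $KP_{3,4}^3(l)$ be the hyperbolic tetrakis truncated octahedron: take a hyperbolic truncated octahedron with all faces regular (squares and hexagons) and edge length $l$, and attach to each of its square faces a pyramid obtained by subdividing a regular hyperbolic cube of edge length $l$ into six pyramids with apex at the center of the cube and bases the faces of the cube. Let $\alpha$ be the dihedral angle between two hexagonal faces of the truncated octahedron, $\beta$ the dihedral angle between a square and a hexagonal face of the truncated octahedron, and $\gamma$ the dihedral angle between the base and a side of the attached pyramid. Then there exists a value of $l$ such that \[\alpha+2\beta+2\gamma=2\pi.\]
   Context: The pyramids attached have dihedral angle $2\pi/3$ between adjacent triangular sides, since three cubes meet around each edge of the subdivision. *)

From Stdlib Require Import Reals Ratan.
Open Scope R_scope.

(** * Hyperboloid model of hyperbolic 3-space H^3 in Minkowski space R^{3,1} *)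

Record vec4 := V4 { c0 : R; c1 : R; c2 : R; c3 : R }.

Definition mink (u v : vec4) : R :=
  - c0 u * c0 v + c1 u * c1 v + c2 u * c2 v + c3 u * c3 v.

Definition vadd (u v : vec4) : vec4 :=
  V4 (c0 u + c0 v) (c1 u + c1 v) (c2 u + c2 v) (c3 u + c3 v).
Definition vscale (k : R) (u : vec4) : vec4 :=
  V4 (k * c0 u) (k * c1 u) (k * c2 u) (k * c3 u).

(** Points of H^3 given in Beltrami–Klein coordinates (x,y,z), x^2+y^2+z^2<1,
    sent to the hyperboloid  {X : <X,X> = -1, X_0 > 0}. *)
Definition in_ball (x y z : R) : Prop := x * x + y * y + z * z < 1.

Definition klein (x y z : R) : vec4 :=
  let s := sqrt (1 - (x * x + y * y + z * z)) in
  V4 (1 / s) (x / s) (y / s) (z / s).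

Definition arcosh (t : R) : R := ln (t + sqrt (t * t - 1)).
Definition hdist (P Q : vec4) : R := arcosh (- mink P Q).

(** Orthogonal projection of X onto the tangent space T_P H^3 = P^perp
    (valid for <P,P> = -1). *)
Definition tproj (P X : vec4) : vec4 := vadd X (vscale (mink X P) P).

(** Dihedral angle, along the geodesic line through A and B, between the
    half-plane bounded by that line containing C and the half-plane bounded
    by that line containing D.  It is the angle, measured in T_A H^3, between
    the tangent vectors at A pointing into the two half-planes orthogonally
    to the edge AB. *)
Definition dihedral (A B C D : vec4) : R :=
  let u := tproj A B in
  let w (X : vec4) :=
    let v := tproj A X in vadd v (vscale (- (mink v u / mink u u)) u) in
  acos (mink (w C) (w D) / sqrt (mink (w C) (w C) * mink (w D) (w D))).

(** Vertices: all permutations of (0, +-a, +-b), 0 < a < b, a^2+b^2 < 1.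
    Square faces lie in the planes  x,y,z = +-b; hexagonal faces in the planes
    +-x +-y +-z = a+b.  There are two orbits of edges under the octahedral
    symmetry: square–hexagon edges, e.g. (0,a,b)-(a,0,b), and
    hexagon–hexagon edges, e.g. (0,a,b)-(0,b,a).  All faces are regular with
    edge length l iff both edge types have hyperbolic length l (angles are
    equal by symmetry). *)
Definition trunc_oct_regular (a b l : R) : Prop :=
  0 < a /\ a < b /\ in_ball 0 a b /\
  hdist (klein 0 a b) (klein a 0 b) = l /\
  hdist (klein 0 a b) (klein 0 b a) = l.

(** alpha: dihedral angle between the two hexagons (in x+y+z=a+b and
    -x+y+z=a+b) meeting along the edge (0,a,b)-(0,b,a). *)
Definition TO_alpha (a b : R) : R :=
  dihedral (klein 0 a b) (klein 0 b a) (klein a 0 b) (klein (-a) 0 b).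

(** beta: dihedral angle between the square (in z=b) and the hexagon
    (in x+y+z=a+b) meeting along the edge (0,a,b)-(a,0,b). *)
Definition TO_beta (a b : R) : R :=
  dihedral (klein 0 a b) (klein a 0 b) (klein 0 (-a) b) (klein 0 b a).

Definition cube_regular (c l : R) : Prop :=
  0 < c /\ in_ball c c c /\
  hdist (klein c c c) (klein c (-c) c) = l.

(** gamma: dihedral angle of the pyramid with apex the cube centre (origin)
    and base the face z=c, between the base and the side face spanned by the
    centre and the edge (c,c,c)-(c,-c,c). *)
Definition cube_pyr_gamma (c : R) : R :=
  dihedral (klein c c c) (klein c (-c) c) (klein (-c) c c) (klein 0 0 0).

(* Take l = arcosh (3/2).  In Klein coordinates the regular truncated octahedron
   and the regular cube of edge length l are then forced to be a = c = 1/sqrt 7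
   and b = 2a.  A dihedral angle only depends on the rays through its four
   points, so it can be computed by Gram-Schmidt on the Gram matrix of the
   homogeneous coordinates (1, x, y, z): this gives cos alpha = 1/6,
   cos beta = -1/6 and cos gamma = sqrt (7/12).  Hence beta = pi - alpha and,
   as cos (2 gamma) = 2 (7/12) - 1 = 1/6, also 2 gamma = alpha; so
   alpha + 2 beta + 2 gamma = alpha + 2 (pi - alpha) + alpha = 2 pi. *)

From Stdlib Require Import Reals Lra.
Open Scope R_scope.

Definition hom (x y z : R) : vec4 := V4 1 x y z.

Lemma mink_vscalel k X Y : mink (vscale k X) Y = k * mink X Y.
Proof. destruct X, Y; unfold mink, vscale; simpl; ring. Qed.

Lemma mink_vscaler k X Y : mink X (vscale k Y) = k * mink X Y.
Proof. destruct X, Y; unfold mink, vscale; simpl; ring. Qed.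

Lemma mink_hom x y z x' y' z' :
  mink (hom x y z) (hom x' y' z') = x * x' + y * y' + z * z' - 1.
Proof. unfold mink, hom; simpl; ring. Qed.

Definition schur (aa ax ay xy : R) : R := xy - ax * ay / aa.

Lemma schur_scale k kx ky aa ax ay xy : k <> 0 -> aa <> 0 ->
  schur (k * (k * aa)) (k * (kx * ax)) (k * (ky * ay)) (kx * (ky * xy)) =
  kx * (ky * schur aa ax ay xy).
Proof. intros Hk Ha; unfold schur; field; auto. Qed.

Lemma schur_timelike_neq0 aa ab bb : aa < 0 -> aa * bb < ab * ab -> schur aa ab ab bb <> 0.
Proof.
  intros Ha Hab; unfold schur.
  replace (bb - ab * ab / aa) with ((aa * bb - ab * ab) / aa) by (field; lra).
  unfold Rdiv; apply Rmult_integral_contrapositive_currified; [lra |].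
  apply Rinv_neq_0_compat; lra.
Qed.

Definition reject (u v : vec4) : vec4 := vadd v (vscale (- (mink v u / mink u u)) u).

Lemma mink_reject u v v' : mink u u <> 0 ->
  mink (reject u v) (reject u v') = schur (mink u u) (mink u v) (mink u v') (mink v v').
Proof.
  intros Hu; unfold reject, schur; destruct u, v, v'; unfold mink, vadd, vscale in *; simpl in *.
  field; exact Hu.
Qed.

Lemma tproj_reject A X : mink A A = -1 -> tproj A X = reject A X.
Proof.
  intros HA; unfold tproj, reject; rewrite HA.
  replace (- (mink X A / -1)) with (mink X A) by field; reflexivity.
Qed.

(* [schur aa _ _] is the Gram matrix after projecting away A; a second step
   projects away the edge direction B, and the dihedral angle is the angle
   between C and D in the orthogonal complement of span (A, B). *)
Definition dihedral_cos_gram (aa ab ac ad bb bc bd cc cd dd : R) : R :=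
  let pbb := schur aa ab ab bb in
  let pbc := schur aa ab ac bc in
  let pbd := schur aa ab ad bd in
  let ecc := schur pbb pbc pbc (schur aa ac ac cc) in
  let ecd := schur pbb pbc pbd (schur aa ac ad cd) in
  let edd := schur pbb pbd pbd (schur aa ad ad dd) in
  ecd / sqrt (ecc * edd).

Lemma dihedral_gram A B C D :
  mink A A = -1 -> mink A A * mink B B < mink A B * mink A B ->
  dihedral A B C D = acos (dihedral_cos_gram (mink A A) (mink A B) (mink A C) (mink A D)
    (mink B B) (mink B C) (mink B D) (mink C C) (mink C D) (mink D D)).
Proof.
  intros HA HAB.
  assert (Hu : mink (reject A B) (reject A B) <> 0).
  { rewrite mink_reject by lra; apply schur_timelike_neq0; lra. }
  unfold dihedral; cbv zeta; rewrite !tproj_reject by exact HA.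
  fold (reject (reject A B) (reject A C)) (reject (reject A B) (reject A D)).
  rewrite !mink_reject by (exact Hu || lra).
  reflexivity.
Qed.

Lemma dihedral_cos_gram_scale kA kB kC kD aa ab ac ad bb bc bd cc cd dd :
  kA <> 0 -> kB <> 0 -> 0 < kC -> 0 < kD -> aa < 0 -> aa * bb < ab * ab ->
  dihedral_cos_gram (kA * (kA * aa)) (kA * (kB * ab)) (kA * (kC * ac)) (kA * (kD * ad))
    (kB * (kB * bb)) (kB * (kC * bc)) (kB * (kD * bd))
    (kC * (kC * cc)) (kC * (kD * cd)) (kD * (kD * dd)) =
  dihedral_cos_gram aa ab ac ad bb bc bd cc cd dd.
Proof.
  intros HA HB HC HD Ha Hab.
  pose proof (schur_timelike_neq0 _ _ _ Ha Hab) as Hb.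
  unfold dihedral_cos_gram; cbv zeta.
  rewrite !schur_scale by (assumption || lra).
  set (ecc := schur _ _ _ (schur aa ac ac cc)).
  set (edd := schur _ _ _ (schur aa ad ad dd)).
  replace (kC * (kC * ecc) * (kD * (kD * edd))) with ((kC * kD) * (kC * kD) * (ecc * edd))
    by ring.
  rewrite sqrt_mult_alt, sqrt_square by nra.
  rewrite <- Rmult_assoc; apply Rdiv_mult_l_l; nra.
Qed.

Lemma dihedral_vscale kA kB kC kD A B C D :
  kA * (kA * mink A A) = -1 -> 0 < kB -> 0 < kC -> 0 < kD ->
  mink A A * mink B B < mink A B * mink A B ->
  dihedral (vscale kA A) (vscale kB B) (vscale kC C) (vscale kD D) =
  acos (dihedral_cos_gram (mink A A) (mink A B) (mink A C) (mink A D)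
    (mink B B) (mink B C) (mink B D) (mink C C) (mink C D) (mink D D)).
Proof.
  intros HA HB HC HD HAB.
  assert (HkA : kA <> 0) by (intros ->; lra).
  assert (HAA : mink A A < 0) by nra.
  rewrite dihedral_gram; rewrite ?mink_vscalel, ?mink_vscaler; [| exact HA |].
  - rewrite dihedral_cos_gram_scale; auto; lra.
  - replace (kA * (kA * mink A A) * (kB * (kB * mink B B))) with
      ((kA * kB) * (kA * kB) * (mink A A * mink B B)) by ring.
    replace (kA * (kB * mink A B) * (kA * (kB * mink A B))) with
      ((kA * kB) * (kA * kB) * (mink A B * mink A B)) by ring.
    apply Rmult_lt_compat_l; [nra | exact HAB].
Qed.

Definition klein_scale (x y z : R) : R := / sqrt (1 - (x * x + y * y + z * z)).

Lemma klein_hom x y z : klein x y z = vscale (klein_scale x y z) (hom x y z).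
Proof. unfold klein, klein_scale, hom, vscale; simpl; f_equal; unfold Rdiv; ring. Qed.

Lemma klein_scale_pos x y z : in_ball x y z -> 0 < klein_scale x y z.
Proof. unfold in_ball, klein_scale; intros; apply Rinv_0_lt_compat, sqrt_lt_R0; lra. Qed.

Lemma klein_scale_normalizes x y z : in_ball x y z ->
  klein_scale x y z * (klein_scale x y z * mink (hom x y z) (hom x y z)) = -1.
Proof.
  unfold in_ball, klein_scale; intros H.
  rewrite <- Rmult_assoc, <- Rinv_mult, sqrt_sqrt, mink_hom by lra.
  field; lra.
Qed.

Lemma cosh_arcosh t : 1 <= t -> cosh (arcosh t) = t.
Proof.
  intros Ht; unfold cosh, arcosh.
  assert (Hs := sqrt_sqrt (t * t - 1) ltac:(nra)).
  assert (Hs0 := sqrt_pos (t * t - 1)).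
  set (s := sqrt (t * t - 1)) in *.
  rewrite exp_Ropp, exp_ln by lra.
  field_simplify_eq; nra.
Qed.

Lemma arcosh_pos t : 1 < t -> 0 < arcosh t.
Proof.
  intros Ht; unfold arcosh; rewrite <- ln_1.
  apply ln_increasing; [lra |].
  pose proof (sqrt_pos (t * t - 1)); lra.
Qed.

(* [ln] is [0] on nonpositive arguments. *)
Lemma gt1_of_ln_pos g : 0 < ln g -> 1 < g.
Proof.
  intros Hg; destruct (Rlt_le_dec 0 g) as [Hg0 | Hg0].
  - apply ln_lt_inv; [lra | exact Hg0 | rewrite ln_1; exact Hg].
  - unfold ln in Hg; destruct (Rlt_dec 0 g); lra.
Qed.

Lemma gt1_of_arcosh_pos s : 0 < arcosh s -> 1 < s.
Proof.
  intros Hs; apply gt1_of_ln_pos in Hs.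
  destruct (Rlt_le_dec 1 s) as [| Hs1]; [assumption | exfalso].
  destruct (Rle_lt_dec (s * s - 1) 0) as [Hneg | Hpos].
  - rewrite sqrt_neg_0 in Hs by exact Hneg; lra.
  - pose proof (sqrt_sqrt (s * s - 1) ltac:(lra)); nra.
Qed.

Lemma arcosh_inj s t : 1 < t -> arcosh s = arcosh t -> s = t.
Proof.
  intros Ht Hst.
  assert (Hs : 1 < s) by (apply gt1_of_arcosh_pos; rewrite Hst; apply arcosh_pos, Ht).
  rewrite <- (cosh_arcosh s), <- (cosh_arcosh t), Hst by lra; reflexivity.
Qed.

Lemma hdist_klein_same_norm x y z x' y' z' :
  in_ball x y z -> x * x + y * y + z * z = x' * x' + y' * y' + z' * z' ->
  hdist (klein x y z) (klein x' y' z') =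
  arcosh ((1 - (x * x' + y * y' + z * z')) / (1 - (x * x + y * y + z * z))).
Proof.
  unfold in_ball; intros Hb Hn; unfold hdist; f_equal.
  rewrite !klein_hom, mink_vscalel, mink_vscaler, mink_hom.
  unfold klein_scale; rewrite <- Hn, <- Rmult_assoc, <- Rinv_mult, sqrt_sqrt by lra.
  field; lra.
Qed.

Lemma hdist_klein_eq_arcosh x y z x' y' z' t :
  in_ball x y z -> x * x + y * y + z * z = x' * x' + y' * y' + z' * z' -> 1 < t ->
  hdist (klein x y z) (klein x' y' z') = arcosh t <->
  1 - (x * x' + y * y' + z * z') = t * (1 - (x * x + y * y + z * z)).
Proof.
  intros Hb Hn Ht; unfold in_ball in Hb.
  rewrite hdist_klein_same_norm by assumption.
  split.
  - intros H; apply arcosh_inj in H; [| exact Ht].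
    rewrite <- H; field; lra.
  - intros ->; f_equal; field; lra.
Qed.

Lemma trunc_oct_regular_iff a b :
  trunc_oct_regular a b (arcosh (3/2)) <-> 0 < a /\ a * a = 1/7 /\ b = 2 * a.
Proof.
  unfold trunc_oct_regular.
  split.
  - intros (Ha & Hab & Hb & Hsq & Hhex).
    rewrite hdist_klein_eq_arcosh in Hsq, Hhex by (assumption || ring || lra).
    unfold in_ball in Hb.
    assert (Hb2 : b = 2 * a) by nra.
    subst b; repeat split; nra.
  - intros (Ha & Ha2 & ->).
    assert (Hb : in_ball 0 a (2 * a)) by (unfold in_ball; nra).
    rewrite !hdist_klein_eq_arcosh by (assumption || ring || lra).
    repeat split; (assumption || nra).
Qed.

Lemma cube_regular_iff c : cube_regular c (arcosh (3/2)) <-> 0 < c /\ c * c = 1/7.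
Proof.
  unfold cube_regular.
  split.
  - intros (Hc & Hb & Hedge).
    rewrite hdist_klein_eq_arcosh in Hedge by (assumption || ring || lra).
    split; nra.
  - intros (Hc & Hc2).
    assert (Hb : in_ball c c c) by (unfold in_ball; nra).
    rewrite hdist_klein_eq_arcosh by (assumption || ring || lra).
    repeat split; (assumption || nra).
Qed.

Lemma div_sqrt_eq x w r : 0 < w -> 0 <= x * r -> x * x = r * r * w -> x / sqrt w = r.
Proof.
  intros Hw Hxr Hx.
  assert (Hs : 0 < sqrt w) by (apply sqrt_lt_R0; lra).
  assert (Hsq := sqrt_sqrt w (Rlt_le _ _ Hw)).
  apply (Rmult_eq_reg_r (sqrt w)); [| lra].
  unfold Rdiv; rewrite Rmult_assoc, Rinv_l, Rmult_1_r by lra.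
  assert (Hfac : (x - r * sqrt w) * (x + r * sqrt w) = 0).
  { replace ((x - r * sqrt w) * (x + r * sqrt w)) with (x * x - r * r * (sqrt w * sqrt w))
      by ring.
    rewrite Hsq, Hx; ring. }
  destruct (Rmult_integral _ _ Hfac) as [H | H]; [lra |].
  assert (Hr : r * r <= 0) by nra.
  assert (Hr0 : r = 0) by nra.
  subst r; nra.
Qed.

Ltac klein_side_condition :=
  first [apply klein_scale_normalizes | apply klein_scale_pos | idtac];
  unfold in_ball; rewrite ?mink_hom; nra.

Lemma TO_alpha_at a : 0 < a -> a * a = 1/7 -> TO_alpha a (2 * a) = acos (1/6).
Proof.
  intros Ha0 Ha.
  unfold TO_alpha; rewrite !klein_hom, dihedral_vscale by klein_side_condition.
  rewrite !mink_hom; f_equal.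
  transitivity (dihedral_cos_gram (-2/7) (-3/7) (-3/7) (-3/7) (-2/7) (-5/7) (-5/7) (-2/7) (-4/7) (-2/7)).
  { f_equal; nra. }
  unfold dihedral_cos_gram, schur; cbv zeta.
  apply div_sqrt_eq; [lra | lra | field].
Qed.

Lemma TO_beta_at a : 0 < a -> a * a = 1/7 -> TO_beta a (2 * a) = acos (- (1/6)).
Proof.
  intros Ha0 Ha.
  unfold TO_beta; rewrite !klein_hom, dihedral_vscale by klein_side_condition.
  rewrite !mink_hom; f_equal.
  transitivity (dihedral_cos_gram (-2/7) (-3/7) (-4/7) (-3/7) (-2/7) (-3/7) (-5/7) (-2/7) (-1) (-2/7)).
  { f_equal; nra. }
  unfold dihedral_cos_gram, schur; cbv zeta.
  apply div_sqrt_eq; [lra | lra | field].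
Qed.

Lemma cube_pyr_gamma_at c : 0 < c -> c * c = 1/7 -> cube_pyr_gamma c = acos (sqrt (7/12)).
Proof.
  intros Hc0 Hc.
  unfold cube_pyr_gamma; rewrite !klein_hom, dihedral_vscale by klein_side_condition.
  rewrite !mink_hom; f_equal.
  transitivity (dihedral_cos_gram (-4/7) (-6/7) (-6/7) (-1) (-4/7) (-8/7) (-1) (-4/7) (-1) (-1)).
  { f_equal; nra. }
  unfold dihedral_cos_gram, schur; cbv zeta.
  apply div_sqrt_eq; [lra | apply Rmult_le_pos; [lra | apply sqrt_pos] |].
  rewrite sqrt_sqrt by lra; field.
Qed.

Lemma acos_double y : 0 <= y <= 1 -> 2 * acos y = acos (2 * (y * y) - 1).
Proof.
  intros Hy.
  assert (Hcos : cos (acos y) = y) by (apply cos_acos; lra).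
  pose proof (acos_bound y) as Hb.
  assert (Hhalf : acos y <= PI / 2).
  { destruct (Rle_lt_dec (acos y) (PI / 2)) as [| Hlt]; [assumption |].
    pose proof (cos_lt_0 _ Hlt ltac:(pose proof PI_RGT_0; lra)); lra. }
  rewrite <- (acos_cos (2 * acos y)) by lra.
  f_equal; rewrite cos_2a_cos, Hcos; ring.
Qed.

Theorem theorem7p1 :
  exists l : R, 0 < l /\
    (exists a b c : R, trunc_oct_regular a b l /\ cube_regular c l) /\
    (forall a b c : R, trunc_oct_regular a b l -> cube_regular c l ->
       TO_alpha a b + 2 * TO_beta a b + 2 * cube_pyr_gamma c = 2 * PI).
Proof.
  exists (arcosh (3/2)); split; [apply arcosh_pos; lra |]; split.
  - assert (Ha : 0 < sqrt (1/7) /\ sqrt (1/7) * sqrt (1/7) = 1/7)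
      by (split; [apply sqrt_lt_R0 | apply sqrt_sqrt]; lra).
    exists (sqrt (1/7)), (2 * sqrt (1/7)), (sqrt (1/7)).
    rewrite trunc_oct_regular_iff, cube_regular_iff; tauto.
  - intros a b c Hto Hcube.
    apply trunc_oct_regular_iff in Hto as (Ha0 & Ha & ->).
    apply cube_regular_iff in Hcube as (Hc0 & Hc).
    assert (Hgamma : 2 * acos (sqrt (7/12)) = acos (1/6)).
    { assert (Hle1 : sqrt (7/12) <= 1) by (rewrite <- sqrt_1; apply sqrt_le_1_alt; lra).
      rewrite acos_double, sqrt_sqrt by (pose proof (sqrt_pos (7/12)); lra).
      f_equal; field. }
    rewrite TO_alpha_at, TO_beta_at, cube_pyr_gamma_at, acos_opp, Hgamma by assumption.
    ring.
Qed.
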